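(* Let $k>1$ be an integer. Every vertex $v$ of $\mathcal F_k$ is a cut vertex: deleting $v$ (and its incident edges) from the connected component of $\mathcal F_k$ containing $v$ leaves a disconnected graph.
   Context: The vertex set $V$ consists of all reduced fractions $p/q$ with $p,q\in\mathbb Z$, $\gcd(p,q)=1$, together with $1/0$; here $p/q$ and $(-p)/(-q)$ denote the same vertex. For vertices define $d(p/q,a/b)=|pb-qa|$. The graph $\mathcal F_k$ has vertex set $V$, with an edge between $p/q$ and $a/b$ exactly when $d(p/q,a/b)=k$. *)

From Stdlib Require Import ZArith.
Open Scope Z_scope.

(* A vertex p/q is represented by a pair (p,q) of integers with gcd(p,q)=1;
   1/0 is (1,0). The pairs (p,q) and (-p,-q) denote the same vertex. *)
Definition is_vertex (x : Z * Z) : Prop := Z.gcd (fst x) (snd x) = 1.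

Definition same_vertex (x y : Z * Z) : Prop :=
  x = y \/ (fst x = - fst y /\ snd x = - snd y).

(* d(p/q, a/b) = |p b - q a| (independent of the sign representatives). *)
Definition dist (x y : Z * Z) : Z := Z.abs (fst x * snd y - snd x * fst y).

Definition adjF (k : Z) (x y : Z * Z) : Prop := dist x y = k.

(* Reachability in the subgraph of F_k induced on the vertices satisfying P
   (P is assumed to imply is_vertex). *)
Inductive reach_in (P : Z * Z -> Prop) (k : Z) (x : Z * Z) : Z * Z -> Prop :=
| reach_refl : P x -> reach_in P k x x
| reach_step : forall y z, reach_in P k x y -> P z -> adjF k y z -> reach_in P k x z.

Definition vertex_minus (v : Z * Z) (x : Z * Z) : Prop :=
  is_vertex x /\ ~ same_vertex x v.

From Stdlib Require Import ZArith Lia.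
Open Scope Z_scope.

(* Complete v = (p, q) to a unimodular basis (v, (r, s)) and write every vertex as
   x = A v + B (r, s). Then d(v, x) = |B|, so the neighbours of v are the vertices
   with B = ±k, and v itself is the only vertex with B = 0. Call x "below" when k
   divides B and A/B < 1. An edge x y of F_k with x below forces k | B_y and makes
   the fractions A_x/(B_x/k), A_y/(B_y/k) Farey neighbours; an integer, here k, can
   never lie strictly between two Farey neighbours, so y is below as well unless
   y = v. Hence the neighbours (k-1) v + k (r, s), which is below, and
   (k+1) v + k (r, s), which is not, lie in different components of F_k - v. *)

Lemma coprime_of_span (a b x y u1 v1 u2 v2 : Z) :
  Z.gcd a b = 1 -> a = u1 * x + v1 * y -> b = u2 * x + v2 * y -> Z.gcd x y = 1.
Proof.
  intros Hab -> ->. destruct (Z.gcd_bezout _ _ _ Hab) as [c [d Hcd]].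
  apply Z.bezout_1_gcd. exists (c * u1 + d * u2), (c * v1 + d * v2).
  rewrite <- Hcd. ring.
Qed.

(* If a/m and c/n are Farey neighbours, then [k] is not strictly between them:
   (a n - m c) m n = n^2 X - m^2 Y with X, Y the two products below, and the
   right-hand side would exceed |m n| in absolute value if X and Y had opposite signs. *)
Lemma farey_neighbours_same_side (k a m c n : Z) :
  Z.abs (a * n - m * c) = 1 -> n <> 0 -> c - k * n <> 0 ->
  (a - k * m) * m < 0 -> (c - k * n) * n < 0.
Proof.
  intros Hdet Hn Hc Hx.
  destruct (Z.lt_ge_cases ((c - k * n) * n) 0) as [|Hy]; [assumption | exfalso].
  set (X := (a - k * m) * m) in Hx. set (Y := (c - k * n) * n) in Hy.
  assert (Hid : (a * n - m * c) * (m * n) = n * n * X - m * m * Y) by (unfold X, Y; ring).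
  assert (Hm : m <> 0) by (intros ->; unfold X in Hx; lia).
  assert (HY : Y <> 0) by (unfold Y; intro HY; apply Z.mul_eq_0 in HY; lia).
  assert (Hsq : n * n * X - m * m * Y <= - (n * n) - m * m) by nia.
  destruct (Z.abs_eq_or_opp (a * n - m * c)) as [E | E]; rewrite Hdet in E; nia.
Qed.

Lemma reach_in_end (P : Z * Z -> Prop) (k : Z) (x z : Z * Z) :
  reach_in P k x z -> P z.
Proof. now destruct 1. Qed.

Lemma reach_in_invariant (P I : Z * Z -> Prop) (k : Z) (x z : Z * Z) :
  (forall y y', P y -> I y -> P y' -> adjF k y y' -> I y') ->
  I x -> reach_in P k x z -> I z.
Proof.
  intros Hstep Hx. induction 1 as [| y z R IH Pz Hyz]; [assumption |].
  exact (Hstep y z (reach_in_end _ _ _ _ R) IH Pz Hyz).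
Qed.

Section UnimodularCoordinates.

Variables (k p q r s : Z).
Hypothesis det1 : p * s - q * r = 1.

Definition acoord (x : Z * Z) : Z := s * fst x - r * snd x.
Definition bcoord (x : Z * Z) : Z := p * snd x - q * fst x.
Definition of_coords (a b : Z) : Z * Z := (p * a + r * b, q * a + s * b).

Lemma fst_coords (x : Z * Z) : fst x = p * acoord x + r * bcoord x.
Proof.
  unfold acoord, bcoord. transitivity (fst x * (p * s - q * r)); [rewrite det1 | ]; ring.
Qed.

Lemma snd_coords (x : Z * Z) : snd x = q * acoord x + s * bcoord x.
Proof.
  unfold acoord, bcoord. transitivity (snd x * (p * s - q * r)); [rewrite det1 | ]; ring.
Qed.

Lemma acoord_of_coords (a b : Z) : acoord (of_coords a b) = a.
Proof.
  unfold acoord, of_coords; simpl.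
  transitivity (a * (p * s - q * r)); [ | rewrite det1]; ring.
Qed.

Lemma bcoord_of_coords (a b : Z) : bcoord (of_coords a b) = b.
Proof.
  unfold bcoord, of_coords; simpl.
  transitivity (b * (p * s - q * r)); [ | rewrite det1]; ring.
Qed.

Lemma det_coords (x y : Z * Z) :
  fst x * snd y - snd x * fst y = acoord x * bcoord y - bcoord x * acoord y.
Proof.
  rewrite (fst_coords x), (snd_coords x), (fst_coords y), (snd_coords y).
  transitivity ((acoord x * bcoord y - bcoord x * acoord y) * (p * s - q * r));
    [ | rewrite det1]; ring.
Qed.

Lemma dist_center (x : Z * Z) : dist (p, q) x = Z.abs (bcoord x).
Proof. reflexivity. Qed.

Lemma coprime_coords (x : Z * Z) : is_vertex x -> Z.gcd (acoord x) (bcoord x) = 1.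
Proof. intro Hx. exact (coprime_of_span _ _ _ _ _ _ _ _ Hx (fst_coords x) (snd_coords x)). Qed.

Lemma of_coords_vertex (a b : Z) : Z.gcd a b = 1 -> is_vertex (of_coords a b).
Proof.
  intro Hab. apply (coprime_of_span a b _ _ s (- r) (- q) p Hab).
  - rewrite <- (acoord_of_coords a b) at 1. unfold acoord. ring.
  - rewrite <- (bcoord_of_coords a b) at 1. unfold bcoord. ring.
Qed.

Lemma same_center_bcoord (x : Z * Z) : same_vertex x (p, q) -> bcoord x = 0.
Proof. unfold bcoord; intros [-> | [-> ->]]; simpl; ring. Qed.

Lemma bcoord_eq0_same_center (x : Z * Z) :
  is_vertex x -> bcoord x = 0 -> same_vertex x (p, q).
Proof.
  intros Hx Hb. pose proof (coprime_coords x Hx) as Hg.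
  rewrite Hb, Z.gcd_0_r in Hg. destruct x as [x1 x2].
  pose proof (fst_coords (x1, x2)) as E1. pose proof (snd_coords (x1, x2)) as E2.
  rewrite Hb in E1, E2. simpl in E1, E2.
  destruct (Z.abs_eq_or_opp (acoord (x1, x2))) as [E | E]; rewrite Hg in E;
    [left; f_equal | right; simpl; split]; lia.
Qed.

(* Encodes [k | B], [B <> 0] and [A/B < 1] without division. *)
Definition below (x : Z * Z) : Prop :=
  exists m, bcoord x = k * m /\ (acoord x - k * m) * m < 0.

Lemma below_edge (x y : Z * Z) :
  1 < k -> is_vertex x -> below x -> is_vertex y -> ~ same_vertex y (p, q) ->
  adjF k x y -> below y.
Proof.
  intros Hk Hx [m [Hm Hbelow]] Hy Hyv Hxy.
  pose proof (coprime_coords x Hx) as Gx. pose proof (coprime_coords y Hy) as Gy.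
  unfold adjF, dist in Hxy. rewrite det_coords, Hm in Hxy.
  assert (Gk : Z.gcd k (acoord x) = 1).
  { refine (coprime_of_span _ _ _ _ m 0 0 1 ltac:(rewrite Z.gcd_comm; exact Gx) _ _);
      rewrite ?Hm; ring. }
  assert (Hdiv : (k | acoord x * bcoord y)).
  { destruct (Z.abs_eq_or_opp (acoord x * bcoord y - k * m * acoord y)) as [E | E];
      rewrite Hxy in E; [exists (1 + m * acoord y) | exists (m * acoord y - 1)]; lia. }
  destruct (Z.gauss _ _ _ Hdiv Gk) as [n Hn].
  exists n. split; [lia |].
  assert (Hn0 : n <> 0).
  { intros ->. apply Hyv, bcoord_eq0_same_center; [exact Hy | lia]. }
  assert (Hfarey : Z.abs (acoord x * n - m * acoord y) = 1).
  { rewrite Hn in Hxy.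
    replace (acoord x * (n * k) - k * m * acoord y)
      with (k * (acoord x * n - m * acoord y)) in Hxy by ring.
    rewrite Z.abs_mul, (Z.abs_eq k) in Hxy by lia. nia. }
  assert (Hoff : acoord y - k * n <> 0).
  { intro E. rewrite Hn in Gy. replace (acoord y) with (n * k) in Gy by lia.
    rewrite Z.gcd_diag in Gy. rewrite Z.abs_mul, (Z.abs_eq k) in Gy by lia. nia. }
  exact (farey_neighbours_same_side k _ _ _ _ Hfarey Hn0 Hoff Hbelow).
Qed.

Lemma center_neighbour (a : Z) :
  0 < k -> Z.gcd a k = 1 ->
  is_vertex (of_coords a k) /\ adjF k (p, q) (of_coords a k) /\
  ~ same_vertex (of_coords a k) (p, q).
Proof.
  intros Hk Ha. pose proof (bcoord_of_coords a k) as HB.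
  split; [now apply of_coords_vertex |]. split.
  - unfold adjF. rewrite dist_center, HB. lia.
  - intro E. apply same_center_bcoord in E. lia.
Qed.

Lemma below_of_coords (a : Z) : 0 < k -> below (of_coords a k) <-> a < k.
Proof.
  intro Hk. unfold below. rewrite acoord_of_coords, bcoord_of_coords. split.
  - intros [m [Hm Hbelow]]. nia.
  - intro Ha. exists 1. lia.
Qed.

Lemma below_reach (u z : Z * Z) :
  1 < k -> below u -> reach_in (vertex_minus (p, q)) k u z -> below z.
Proof.
  intros Hk. apply reach_in_invariant.
  intros y y' [Hy _] Hbelow [Hy' Hy'v]. exact (below_edge y y' Hk Hy Hbelow Hy' Hy'v).
Qed.

End UnimodularCoordinates.

Theorem proposition4p14 (k : Z) (hk : 1 < k) (v : Z * Z) (hv : is_vertex v) :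
  exists u w : Z * Z,
    reach_in is_vertex k v u /\ reach_in is_vertex k v w /\
    ~ same_vertex u v /\ ~ same_vertex w v /\
    ~ reach_in (vertex_minus v) k u w.
Proof.
  destruct v as [p q].
  destruct (Z.gcd_bezout _ _ _ hv) as [s [b Hb]]; simpl in Hb.
  assert (det1 : p * s - q * (- b) = 1) by lia.
  assert (Hk : 0 < k) by lia.
  destruct (center_neighbour k p q (- b) s det1 (k - 1)) as [Vu [Au Nu]];
    [exact Hk | apply Z.bezout_1_gcd; exists (-1), 1; ring |].
  destruct (center_neighbour k p q (- b) s det1 (k + 1)) as [Vw [Aw Nw]];
    [exact Hk | apply Z.bezout_1_gcd; exists 1, (-1); ring |].
  exists (of_coords p q (- b) s (k - 1) k), (of_coords p q (- b) s (k + 1) k).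
  repeat split; try assumption.
  - exact (reach_step _ _ _ _ _ (reach_refl _ _ _ hv) Vu Au).
  - exact (reach_step _ _ _ _ _ (reach_refl _ _ _ hv) Vw Aw).
  - intro R. apply (below_reach k p q (- b) s det1) in R;
      [ | exact hk | apply (below_of_coords k p q (- b) s det1 _ Hk); lia].
    apply (below_of_coords k p q (- b) s det1 _ Hk) in R. lia.
Qed.
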